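(* Let $N\ge 2$ and let $y_1,\dots,y_N$, $r_1,\dots,r_N$ be arbitrary real constants. For each integer $j$ let $\bm{x}_j$ be the $N$-dimensional column vector $\bm{x}_j=(|y_1+jr_1|,\,|y_2+jr_2|,\,\dots,\,|y_N+jr_N|)^T$. For a set $J=\{j_1<j_2<\dots<j_N\}$ of $N$ integers write $U(J)=\max[\bm{x}_{j_1}\ \bm{x}_{j_2}\ \dots\ \bm{x}_{j_N}]$ (ultradiscrete permanent). Then for all integers $1\le k_1<k_2<k_3\le N+1$, \[ U(\{1,\dots,N+1\}\setminus\{k_2\})+U(\{1,\dots,N+2\}\setminus\{k_1,k_3\}) \] \[ =\max\Bigl(U(\{1,\dots,N+1\}\setminus\{k_3\})+U(\{1,\dots,N+2\}\setminus\{k_1,k_2\}),\ U(\{1,\dots,N+1\}\setminus\{k_1\})+U(\{1,\dots,N+2\}\setminus\{k_2,k_3\})\Bigr). \]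
   Context: Ultradiscrete permanent (UP): for a real $N\times N$ matrix $A=(a_{ij})$, $\max A=\max[a_{ij}]_{1\le i,j\le N}\equiv\max_{\pi}\sum_{i=1}^N a_{i\pi(i)}$, the maximum over all permutations $\pi$ of $\{1,\dots,N\}$. For column vectors $\bm{b}_1,\dots,\bm{b}_N\in\mathbb{R}^N$, $\max[\bm{b}_1\ \dots\ \bm{b}_N]$ is the UP of the matrix with these columns. *)

From mathcomp Require Import all_boot all_order all_algebra all_fingroup.
Set Implicit Arguments. Unset Strict Implicit. Unset Printing Implicit Defensive.
Import Order.TTheory GRing.Theory Num.Theory.
Local Open Scope ring_scope.

(* The seed of the iterated max is the identity-permutation term, which is
   itself one of the maximised terms, so this is exactly the maximum. *)
Definition upm (R : realDomainType) (n : nat) (A : 'M[R]_n) : R :=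
  \big[Num.max/(\sum_i A i i)]_(s : 'S_n) \sum_i A i (s i).

Definition xvec (R : realDomainType) (n : nat) (y r : 'I_n -> R) (j : int)
  : 'cV[R]_n := \col_i `|y i + j%:~R * r i|.

Definition Uperm (R : realDomainType) (n : nat) (y r : 'I_n -> R)
  (J : seq int) : R :=
  upm (\matrix_(i < n, c < n) xvec y r (nth 0%R J c) i 0).

Definition range_minus (m : nat) (K : seq nat) : seq int :=
  [seq (j%:Z) | j <- iota 1 m & j \notin K].

From mathcomp Require Import all_boot all_order all_algebra all_fingroup.
From mathcomp Require Import zify ring lra.
Set Implicit Arguments. Unset Strict Implicit. Unset Printing Implicit Defensive.
Import Order.TTheory GRing.Theory Num.Theory.

(* A term of U(X) + U(Y) is a pair of bijections s, t from the rows onto the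
   column sets X and Y, so each row i carries a chord {s i, t i} of columns.
   The three terms of the identity have the same columns S common to both
   index sets and split the remaining columns a < b < c < d as {a,c} | {b,d}
   (crossing, left-hand side), {a,b} | {c,d} and {b,c} | {a,d} (uncrossed).
   Exchanging the roles of s and t along the alternating path that starts at
   a free column preserves the weight and moves a configuration to another
   type: from the crossed type it reaches an uncrossed one, giving <=.
   Conversely, if an uncrossed configuration reaches the other uncrossed
   type, a parity count shows that some chord on the path crosses a chord
   off it; since x |-> |y + x r| is convex with slopes +-r, exchanging one
   endpoint between these two rows does not decrease the weight and strictly
   decreases the number of crossing pairs, and induction on that number ends
   in the crossed type, giving >=. *)

(** * Crossing chords *)

Definition cross (a b c d : nat) : bool :=
  let: (p, q, u, v) := (minn a b, maxn a b, minn c d, maxn c d) in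
  [&& p < u, u < q & q < v] || [&& u < p, p < v & v < q].

Lemma cross_sym a b c d : cross a b c d = cross c d a b.
Proof. by rewrite /cross orbC. Qed.

Lemma cross_revl a b c d : cross a b c d = cross b a c d.
Proof. by rewrite /cross minnC maxnC. Qed.

Lemma cross_revr a b c d : cross a b c d = cross a b d c.
Proof. by rewrite /cross (minnC c) (maxnC c). Qed.

Lemma cross_self a b : cross a b a b = false.
Proof. rewrite /cross; lia. Qed.

(* For [x] distinct from [a] and [b]: [x] lies strictly between [a] and [b]. *)
Definition inside (a b x : nat) : bool := (a < x) (+) (b < x).

Lemma cross_inside a b x z : x != a -> x != b -> z != a -> z != b ->
  cross a b x z = inside a b x (+) inside a b z.
Proof. rewrite /cross /inside; lia. Qed.

Lemma cross_uncrossed a b c d : cross a b c d -> cross a d b c = false.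
Proof. rewrite /cross; lia. Qed.

Lemma cross_ordered a b c d : a < b -> c < d ->
  cross a b c d = [&& a < c, c < b & b < d] || [&& c < a, a < d & d < b].
Proof.
move=> /ltnW ab /ltnW cd.
by rewrite /cross (minn_idPl ab) (maxn_idPr ab) (minn_idPl cd) (maxn_idPr cd).
Qed.

Lemma cross_degenerate p x y : cross p p x y = false.
Proof. rewrite /cross minnn maxnn; lia. Qed.

Lemma cross_uncross a b c d p q : cross a b c d ->
  (cross p q a c + cross p q b d <= cross p q a b + cross p q c d)%N /\
  (cross p q a d + cross p q b c <= cross p q a b + cross p q c d)%N.
Proof.
wlog pq : p q / p < q.
  move=> W; case: (ltngtP p q) => [/W // | /W | <-]; first by rewrite !(cross_revl q p).
  by rewrite !cross_degenerate.
wlog ab : a b c d / a < b.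
  move=> W; case: (ltngtP a b) => [ab | ba | <-]; [exact: W | | by rewrite cross_degenerate].
  rewrite cross_revl => /(W _ _ _ _ ba); rewrite (cross_revr p q b a).
  by case=> le1 le2; split; rewrite addnC.
wlog cd : a b c d ab / c < d.
  move=> W; case: (ltngtP c d) => [cd | dc | <-]; first exact: W.
    by rewrite cross_revr => /(W _ _ _ _ ab dc); rewrite (cross_revr p q d c); case.
  by rewrite cross_sym cross_degenerate.
wlog ac : a b c d ab cd / a < c.
  move=> W; case: (ltngtP a c) => [ac | ca | ac]; first exact: W.
    rewrite cross_sym => /(W _ _ _ _ cd ab ca).
    rewrite (cross_revr p q c a) (cross_revr p q d b) (cross_revr p q c b) (cross_revr p q d a).
    by case=> le1 le2; split; rewrite [X in (_ <= X)%N]addnC // addnC.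
  by rewrite -ac in cd *; rewrite (cross_ordered ab cd) ltnn.
rewrite cross_ordered // => /orP[/and3P[_ cb bd] | ]; last lia.
have ad : a < d by exact: ltn_trans bd.
by rewrite (cross_revr p q b c) !cross_ordered //; split; lia.
Qed.

(** * Exchanging endpoints between two absolute values *)

Section AbsExchange.
Variable R : realDomainType.
Implicit Types y r x z : R.
Local Open Scope ring_scope.

Definition slope y r x : R := if 0 <= y + x * r then r else - r.

Lemma slope_pm y r x : slope y r x = r \/ slope y r x = - r.
Proof. by rewrite /slope; case: ifP; [left | right]. Qed.

Lemma abs_tangent y r x z : `|y + x * r| + slope y r x * (z - x) <= `|y + z * r|.
Proof.
rewrite /slope; case: ifP => [h | /negbT]; last rewrite -ltNge => h.
  by rewrite ger0_norm // (_ : y + x * r + _ = y + z * r) ?ler_norm //; ring.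
by rewrite ltr0_norm // -normrN (_ : - _ + _ = - (y + z * r)) ?ler_norm //; ring.
Qed.

Variables yu ru yv rv : R.

Definition exchange_gain x z :=
  `|yu + x * ru| + `|yv + z * rv| <= `|yu + z * ru| + `|yv + x * rv|.

Lemma exchange_gain_slope x z :
  (x <= z) && (slope yv rv z <= slope yu ru x) || (z <= x) && (slope yu ru x <= slope yv rv z) ->
  exchange_gain x z.
Proof.
move=> h; have tu := abs_tangent yu ru x z; have tv := abs_tangent yv rv z x.
suff : 0 <= (slope yu ru x - slope yv rv z) * (z - x) by rewrite /exchange_gain; nra.
case/orP: h => /andP[xz s].
  by apply: mulr_ge0; rewrite subr_ge0.
by apply: mulr_le0; rewrite subr_le0.
Qed.

Lemma exchange_gain_interleaved x1 z1 x2 z2 : x1 <= z1 -> z1 <= x2 -> x2 <= z2 ->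
  [|| exchange_gain x1 z1, exchange_gain x1 z2, exchange_gain x2 z1 | exchange_gain x2 z2].
Proof.
move=> h1 h2 h3.
have [e1 | e1] := lerP (slope yv rv z1) (slope yu ru x1).
  by rewrite exchange_gain_slope // h1 e1.
have [e2 | e2] := lerP (slope yu ru x2) (slope yv rv z1).
  by rewrite [exchange_gain x2 z1]exchange_gain_slope ?orbT // h2 e2 orbT.
have [e3 | e3] := lerP (slope yv rv z2) (slope yu ru x2).
  by rewrite [exchange_gain x2 z2]exchange_gain_slope ?orbT // h3 e3.
(* Slopes of [|yu + x ru|] are [ru] or [-ru], and those of [|yv + x rv|] are
   [rv] or [-rv]: they cannot interleave strictly. *)
exfalso; move: e1 e2 e3.
by case: (slope_pm yu ru x1) => ->; case: (slope_pm yu ru x2) => ->;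
   case: (slope_pm yv rv z1) => ->; case: (slope_pm yv rv z2) => ->; lra.
Qed.
End AbsExchange.

(** * Alternating paths of two injections *)

Section AlternatingSets.
Variables I C : finType.
Implicit Types (s t : I -> C) (Z : {set I}).

Definition closed s t Z := forall i j, s i = t j -> (i \in Z) = (j \in Z).

Definition swap_on Z s t i := if i \in Z then t i else s i.

(* The loose ends on the [s] side of the alternating paths through [Z]. *)
Definition ports s t Z := s @: Z :\: t @: setT.

Lemma closed_sym s t Z : closed s t Z -> closed t s Z.
Proof. by move=> cZ i j /esym/cZ ->. Qed.

Lemma closedC s t Z : closed s t Z -> closed s t (~: Z).
Proof. by move=> cZ i j /cZ; rewrite !inE => ->. Qed.

Lemma swap_on_inj s t Z : injective s -> injective t -> closed s t Z ->
  injective (swap_on Z s t).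
Proof.
move=> s_inj t_inj cZ i j; rewrite /swap_on.
case: ifP => iZ; case: ifP => jZ.
- exact: t_inj.
- by move/esym/cZ; rewrite iZ jZ.
- by move/cZ; rewrite iZ jZ.
- exact: s_inj.
Qed.

Lemma imset_swap_on s t Z : injective s -> closed s t Z ->
  swap_on Z s t @: setT = (s @: setT :\: ports s t Z) :|: ports t s Z.
Proof.
move=> s_inj cZ; apply/setP => x; rewrite /ports !inE; apply/imsetP/idP.
- case=> i _ ->; rewrite /swap_on; case: ifP => iZ.
    by rewrite !imset_f //= andbT orbN.
  have -> : (s i \in s @: Z) = false.
    by apply/imsetP => -[j jZ /s_inj ij]; rewrite ij jZ in iZ.
  by rewrite imset_f //= andbF.
- case/orP => [/andP[x_nport /imsetP[j _ xE]] | /andP[_ /imsetP[i iZ ->]]].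
  + subst x.
    have [jZ | jNZ] := boolP (j \in Z); last by exists j; rewrite // /swap_on (negbTE jNZ).
    have /imsetP[i _ sj_ti] : s j \in t @: setT by move: x_nport; rewrite imset_f // andbT negbK.
    by exists i; rewrite // /swap_on -(cZ _ _ sj_ti) jZ.
  + by exists i; rewrite // /swap_on iZ.
Qed.

Lemma closed_shared s t Z : closed s t Z ->
  s @: Z :&: t @: setT = t @: Z :&: s @: setT.
Proof.
move=> cZ; apply/setP => x; rewrite !inE; apply/andP/andP.
- case=> /imsetP[i iZ ->] /imsetP[j _ sij]; split; last exact: imset_f.
  by rewrite sij imset_f // -(cZ _ _ sij).
- case=> /imsetP[j jZ ->] /imsetP[i _ tji]; split; last exact: imset_f.
  by rewrite tji imset_f // (cZ _ _ (esym tji)).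
Qed.

Lemma card_ports s t Z : injective s -> injective t -> closed s t Z ->
  #|ports s t Z| = #|ports t s Z|.
Proof.
move=> s_inj t_inj cZ; apply/eqP; rewrite -(eqn_add2r #|s @: Z :&: t @: setT|).
by rewrite {2}(closed_shared cZ) /ports ![#|_ :\: _| + _]addnC !cardsID !card_imset.
Qed.

Lemma odd_card_ports s t Z (A : {set C}) : closed s t Z ->
  odd (#|s @: Z :&: A| + #|t @: Z :&: A|) =
  odd (#|ports s t Z :&: A| + #|ports t s Z :&: A|).
Proof.
move=> cZ; rewrite -(cardsID (t @: setT) (s @: Z :&: A)) -(cardsID (s @: setT) (t @: Z :&: A)).
rewrite !setIDAC setIAC (closed_shared cZ) -setIAC.
by rewrite addnACA addnn oddD odd_double.
Qed.

Lemma portsC s t Z : injective s ->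
  ports s t (~: Z) = (s @: setT :\: t @: setT) :\: ports s t Z.
Proof.
move=> s_inj; apply/setP => x; rewrite /ports !inE.
have [/imsetP[i _ ->] | xNs] := boolP (x \in s @: setT); last first.
  rewrite !andbF; apply/negbTE; apply: contra xNs => /andP[_ /imsetP[i _ ->]].
  exact: imset_f.
rewrite !(mem_imset _ _ s_inj) !inE.
by case: (i \in Z); case: (s i \in _).
Qed.

Definition chain s t r := [set i | connect [rel i j | s j == t i] r i].

Lemma chain_pred s t r i : i \in chain s t r -> i != r ->
  exists2 k, k \in chain s t r & s i = t k.
Proof.
rewrite inE => /connectP[p]; case/lastP: p => [_ -> | p k]; first by rewrite eqxx.
rewrite rcons_path last_rcons => /andP[rp /eqP si_tk] -> _.
by exists (last r p); rewrite // inE; apply/connectP; exists p.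
Qed.

Lemma closed_chain s t r : injective t -> s r \notin t @: setT -> closed s t (chain s t r).
Proof.
move=> t_inj sr_free i j sij; apply/idP/idP => [ri | rj].
  have ir : i != r by apply: contraNneq sr_free => <-; rewrite sij imset_f.
  by have [k rk /esym] := chain_pred ri ir; rewrite sij => /t_inj <-.
by rewrite !inE in rj *; apply: connect_trans rj (connect1 _); rewrite /= sij.
Qed.

Lemma ports_chain s t r : s r \notin t @: setT -> ports s t (chain s t r) = [set s r].
Proof.
move=> sr_free; apply/setP => x; rewrite /ports !inE.
apply/andP/eqP => [[xNt /imsetP[i ri xE]] | ->].
  subst x; have [-> // | ir] := eqVneq i r.
  by have [k _ sik] := chain_pred ri ir; rewrite sik imset_f in xNt.
by split; last by apply: imset_f; rewrite inE connect0.
Qed.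

Lemma alternating_chain s t p : injective s -> injective t ->
  p \in s @: setT :\: t @: setT ->
  exists Z q, [/\ closed s t Z, ports s t Z = [set p] & ports t s Z = [set q]].
Proof.
move=> s_inj t_inj; rewrite inE => /andP[pNt /imsetP[r _ pE]]; subst p.
have cZ := closed_chain t_inj pNt; have sports := ports_chain pNt.
have /cards1P[q tports] : #|ports t s (chain s t r)| == 1.
  by rewrite -(card_ports s_inj t_inj cZ) sports cards1.
by exists (chain s t r), q.
Qed.
End AlternatingSets.

Lemma card_set1I (T : finType) (a : T) (B : {set T}) : #|[set a] :&: B| = (a \in B).
Proof.
have [aB | aNB] := boolP (a \in B); first by rewrite (setIidPl _) ?cards1 ?sub1set.
rewrite (_ : _ :&: _ = set0) ?cards0 //.
by apply/setP => x; rewrite !inE; case: eqP => // ->; rewrite (negbTE aNB).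
Qed.

Lemma addb_mem_image (I T : finType) (f : I -> T) (A : {set I}) (B : {set T}) : injective f ->
  \big[addb/false]_(u in A) (f u \in B) = odd #|f @: A :&: B|.
Proof.
move=> f_inj; have -> : f @: A :&: B = f @: [set u in A | f u \in B].
  apply/setP => x; rewrite !inE; apply/andP/imsetP => [[/imsetP[u uA ->] fuB] | [u]].
    by exists u; rewrite // inE uA.
  by rewrite inE => /andP[uA fuB] ->; rewrite imset_f.
rewrite (card_imset _ f_inj) -sum1dep_card (big_morph odd oddD (erefl : odd 0 = false)).
by rewrite big_mkcondr; apply: eq_bigr => u _; case: (f u \in B).
Qed.

Section CrossingParity.
Variables (I : finType) (n : nat) (s t : I -> 'I_n).
Hypotheses (s_inj : injective s) (t_inj : injective t).

Lemma closed_apart Z u v : closed s t Z -> u \in Z -> v \notin Z ->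
  [/\ s v != s u, s v != t u, t v != s u & t v != t u].
Proof.
move=> cZ uZ vNZ; have uv : u != v by apply: contraNneq vNZ => <-.
split; apply: contraNneq uv.
- by move/s_inj ->.
- by move/cZ; rewrite uZ (negbTE vNZ).
- by move/esym/cZ; rewrite uZ (negbTE vNZ).
- by move/t_inj ->.
Qed.

(* A column shared by [s] and [t] on [Z] is counted twice below [x], so
   modulo 2 only the ports of [Z] count. *)
Lemma addb_inside_ports Z p q x : closed s t Z ->
  ports s t Z = [set p] -> ports t s Z = [set q] ->
  \big[addb/false]_(u in Z) inside (s u) (t u) x = inside p q x.
Proof.
move=> cZ sports tports; set A := [set c : 'I_n | c < x].
rewrite (eq_bigr (fun u => (s u \in A) (+) (t u \in A))) => [|u _]; last by rewrite !inE.
rewrite big_split /= !addb_mem_image // -oddD odd_card_ports // sports tports.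
by rewrite !card_set1I !inE oddD !oddb.
Qed.

Lemma addb_crossings_ports Z p q p' q' : closed s t Z ->
  ports s t Z = [set p] -> ports t s Z = [set q] ->
  ports s t (~: Z) = [set p'] -> ports t s (~: Z) = [set q'] ->
  \big[addb/false]_(u in Z) \big[addb/false]_(v in ~: Z) cross (s u) (t u) (s v) (t v)
  = cross p q p' q'.
Proof.
move=> cZ sZ tZ sZ' tZ'.
have port_in (f g : I -> 'I_n) W x : ports f g W = [set x] -> exists2 i, i \in W & x = f i.
  by move=> fgW; have /setDP[/imsetP] : x \in ports f g W by rewrite fgW set11.
have [[u0 u0Z pE] [u1 u1Z qE]] := (port_in _ _ _ _ sZ, port_in _ _ _ _ tZ).
have [[v0 v0Z p'E] [v1 v1Z q'E]] := (port_in _ _ _ _ sZ', port_in _ _ _ _ tZ').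
rewrite !inE in v0Z v1Z; subst p q p' q'.
rewrite exchange_big /=.
transitivity (\big[addb/false]_(v in ~: Z)
                (inside (s u0) (t u1) (s v) (+) inside (s u0) (t u1) (t v))).
  apply: eq_bigr => v; rewrite inE => vNZ.
  rewrite -(addb_inside_ports _ cZ sZ tZ) -(addb_inside_ports _ cZ sZ tZ) -big_split.
  by apply: eq_bigr => u uZ; have [] := closed_apart cZ uZ vNZ; apply: cross_inside.
transitivity (\big[addb/false]_(v in ~: Z)
                (inside (s v) (t v) (s u0) (+) inside (s v) (t v) (t u1))).
  apply: eq_bigr => v; rewrite inE => vNZ.
  have [? _ ? _] := closed_apart cZ u0Z vNZ; have [_ ? _ ?] := closed_apart cZ u1Z vNZ.
  by rewrite -cross_inside // cross_sym cross_inside //; rewrite eq_sym.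
rewrite big_split /= !(addb_inside_ports _ (closedC cZ) sZ' tZ').
have [? _ _ _] := closed_apart cZ u0Z v0Z; have [_ _ ? _] := closed_apart cZ u0Z v1Z.
have [_ ? _ _] := closed_apart cZ u1Z v0Z; have [_ _ _ ?] := closed_apart cZ u1Z v1Z.
by rewrite cross_sym -cross_inside //; rewrite eq_sym.
Qed.

Lemma closed_crossing Z p q p' q' : closed s t Z ->
  ports s t Z = [set p] -> ports t s Z = [set q] ->
  ports s t (~: Z) = [set p'] -> ports t s (~: Z) = [set q'] -> cross p q p' q' ->
  exists u v, [/\ u \in Z, v \notin Z & cross (s u) (t u) (s v) (t v)].
Proof.
move=> cZ sZ tZ sZ' tZ'; rewrite -(addb_crossings_ports cZ sZ tZ sZ' tZ') => odd_crossings.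
have /exists_inP[u uZ /exists_inP[v]] :
    [exists u in Z, exists v in ~: Z, cross (s u) (t u) (s v) (t v)].
  apply: contraLR odd_crossings; rewrite negb_exists_in => /forall_inP none.
  rewrite big1 // => u /none; rewrite negb_exists_in => /forall_inP none_u.
  by rewrite big1 // => v /none_u /negbTE.
by rewrite inE => vNZ cuv; exists u, v.
Qed.
End CrossingParity.

(** * Configurations *)

Lemma bigD2 {R : Type} {idx : R} {op : Monoid.com_law idx} {I : finType} (F : I -> R) u v :
  u != v -> \big[op/idx]_i F i = op (op (F u) (F v)) (\big[op/idx]_(i | (i != u) && (i != v)) F i).
Proof.
move=> uv; rewrite (bigD1 u) //= (bigD1 v) 1?eq_sym //= Monoid.mulmA.
by congr (op _ _); apply: eq_bigl => i; rewrite andbC.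
Qed.

Lemma double_sumD2 (I : finType) (F : I -> I -> nat) u v : u != v ->
  \sum_i \sum_j F i j =
  (F u u + F u v + F v u + F v v) + \sum_(e | (e != u) && (e != v)) (F e u + F e v + F u e + F v e)
  + \sum_(i | (i != u) && (i != v)) \sum_(j | (j != u) && (j != v)) F i j.
Proof.
move=> uv; rewrite (eq_bigr (fun i => F i u + F i v + \sum_(j | (j != u) && (j != v)) F i j)).
  by rewrite (bigD2 _ uv) /= !big_split /=; lia.
by move=> i _; rewrite (bigD2 _ uv).
Qed.

Lemma ltn_double_sum (I : finType) (F G : I -> I -> nat) u v : u != v ->
  (forall i j, (i != u) && (i != v) -> (j != u) && (j != v) -> G i j = F i j) ->
  (forall e, (e != u) && (e != v) ->
     G e u + G e v + G u e + G v e <= F e u + F e v + F u e + F v e) ->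
  G u u + G u v + G v u + G v v < F u u + F u v + F v u + F v v ->
  \sum_i \sum_j G i j < \sum_i \sum_j F i j.
Proof.
move=> uv off border core; rewrite !(double_sumD2 _ uv).
have -> : \sum_(i | (i != u) && (i != v)) \sum_(j | (j != u) && (j != v)) G i j
          = \sum_(i | (i != u) && (i != v)) \sum_(j | (j != u) && (j != v)) F i j.
  by apply: eq_bigr => i iuv; apply: eq_bigr => j juv; apply: off.
by have := leq_sum (index_enum I) border; lia.
Qed.

Section Configurations.
Variables (R : realDomainType) (I : finType) (n : nat) (w : I -> 'I_n -> R).
Implicit Types (s t : I -> 'I_n) (X Y : {set 'I_n}) (Z : {set I}).
Local Open Scope ring_scope.

Definition config X Y s t := [/\ injective s, injective t, s @: setT = X & t @: setT = Y].

Definition weight s t := \sum_i w i (s i) + \sum_i w i (t i).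

Definition crossings s t := (\sum_i \sum_j cross (s i) (t i) (s j) (t j))%N.

Lemma config_sym X Y s t : config X Y s t -> config Y X t s.
Proof. by case. Qed.

Lemma weight_sym s t : weight s t = weight t s.
Proof. exact: addrC. Qed.

Lemma crossings_sym s t : crossings s t = crossings t s.
Proof. by apply: eq_bigr => i _; apply: eq_bigr => j _; rewrite cross_revl cross_revr. Qed.

Lemma weight_swap_on Z s t : weight (swap_on Z s t) (swap_on Z t s) = weight s t.
Proof.
rewrite /weight -!big_split; apply: eq_bigr => i _.
by rewrite /swap_on; case: ifP => // _; exact: addrC.
Qed.

Lemma crossings_swap_on Z s t : crossings (swap_on Z s t) (swap_on Z t s) = crossings s t.
Proof.
apply: eq_bigr => i _; apply: eq_bigr => j _; rewrite /swap_on.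
by case: ifP => _; case: ifP => _;
  [rewrite cross_revl cross_revr | rewrite cross_revl | rewrite cross_revr | ].
Qed.

Lemma config_swap_on X Y s t Z p q : config X Y s t -> closed s t Z ->
  ports s t Z = [set p] -> ports t s Z = [set q] ->
  config (X :\ p :|: [set q]) (Y :\ q :|: [set p]) (swap_on Z s t) (swap_on Z t s).
Proof.
case=> s_inj t_inj sX tY cZ sZ tZ; have cZ' := closed_sym cZ.
split; [exact: swap_on_inj | exact: swap_on_inj | |].
  by rewrite imset_swap_on // sX sZ tZ.
by rewrite imset_swap_on // tY sZ tZ.
Qed.

Lemma config_chain X Y s t p : config X Y s t -> p \in X :\: Y ->
  exists Z q, [/\ q \in Y :\: X, closed s t Z, ports s t Z = [set p], ports t s Z = [set q]
    & config (X :\ p :|: [set q]) (Y :\ q :|: [set p]) (swap_on Z s t) (swap_on Z t s)].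
Proof.
move=> cfg pXY; have [s_inj t_inj sX tY] := cfg.
have pst : p \in s @: setT :\: t @: setT by rewrite sX tY.
have [Z [q [cZ sZ tZ]]] := alternating_chain s_inj t_inj pst.
exists Z, q; split => //; last exact: config_swap_on.
have /setDP[/imsetP[i _ ->] tiNs] : q \in ports t s Z by rewrite tZ set11.
by rewrite inE -sX tiNs -tY imset_f.
Qed.

Lemma config_tperm X Y s t u v : config X Y s t -> config X Y (s \o tperm u v) t.
Proof.
case=> s_inj t_inj sX tY; split => //; first exact: inj_comp s_inj (@perm_inj _ _).
by rewrite imset_comp im_perm_on ?sX //; apply/subsetP.
Qed.

Lemma weight_tperm s t u v : u != v ->
  weight (s \o tperm u v) t + (w u (s u) + w v (s v)) = weight s t + (w u (s v) + w v (s u)).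
Proof.
move=> uv; rewrite /weight (bigD2 _ uv) [in RHS](bigD2 _ uv) /= tpermL tpermR.
rewrite (eq_bigr (fun i => w i (s i))) => [|i /andP[iu iv]]; last by rewrite tpermD // eq_sym.
by ring.
Qed.

Lemma crossings_tperm_lt s t u v : cross (s u) (t u) (s v) (t v) ->
  (crossings (s \o tperm u v) t < crossings s t)%N.
Proof.
move=> cuv; have uv : u != v by apply: contraTneq cuv => ->; rewrite cross_self.
have tpermE i : (i != u) && (i != v) -> tperm u v i = i.
  by case/andP => iu iv; rewrite tpermD // eq_sym.
apply: (ltn_double_sum uv) => /= [i j /tpermE -> /tpermE -> // | e /tpermE -> |].
  rewrite tpermL tpermR (cross_sym (s v)) (cross_sym (s u)) (cross_revr _ _ (s v)).
  rewrite (cross_sym (s u) (t u)) (cross_sym (s v) (t v)).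
  by have [_] := cross_uncross (s e) (t e) cuv; lia.
rewrite tpermL tpermR !cross_self (cross_sym (s v) (t v)) cuv.
by rewrite (cross_sym (s v)) (cross_revr _ _ (s v)) cross_uncrossed.
Qed.

Lemma tperm_improves s t u v : cross (s u) (t u) (s v) (t v) ->
  w u (s u) + w v (s v) <= w u (s v) + w v (s u) ->
  weight s t <= weight (s \o tperm u v) t /\ (crossings (s \o tperm u v) t < crossings s t)%N.
Proof.
move=> cuv gain; split; last exact: crossings_tperm_lt.
have uv : u != v by apply: contraTneq cuv => ->; rewrite cross_self.
by have := weight_tperm s t uv; lra.
Qed.

Definition interleaving_exchange := forall u v (a b c d : 'I_n), cross a b c d ->
  exists x z, [/\ x \in [:: a; b], z \in [:: c; d] & w u x + w v z <= w u z + w v x].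

Hypothesis w_exchange : interleaving_exchange.

Lemma uncrossing_step X Y X' Y' s t Z u v :
  config X Y s t -> config X' Y' (swap_on Z s t) (swap_on Z t s) ->
  u \in Z -> v \notin Z -> cross (s u) (t u) (s v) (t v) ->
  exists s' t', [/\ config X Y s' t' \/ config X' Y' s' t', weight s t <= weight s' t'
                   & (crossings s' t' < crossings s t)%N].
Proof.
(* The exchanged endpoints are two [s]-values or two [t]-values, either of
   [(s, t)] or of its flip along [Z], which reverses the chords of [Z]. *)
move=> cfg cfg' uZ vNZ cuv.
set s2 := swap_on Z s t; set t2 := swap_on Z t s.
have [s2u t2u s2v t2v] : [/\ s2 u = t u, t2 u = s u, s2 v = s v & t2 v = t v].
  by rewrite /s2 /t2 /swap_on uZ (negbTE vNZ).
have improve f g A B : config A B f g -> weight f g = weight s t -> crossings f g = crossings s t ->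
    cross (f u) (g u) (f v) (g v) -> w u (f u) + w v (f v) <= w u (f v) + w v (f u) ->
    exists s' t', [/\ config A B s' t' /\ config B A t' s', weight s t <= weight s' t'
                     & (crossings s' t' < crossings s t)%N].
  move=> cfgf Wf Cf cf gain; have [Wle Clt] := tperm_improves cf gain.
  exists (f \o tperm u v), g; have cfg'' := config_tperm u v cfgf.
  by split; [split; last exact: config_sym | rewrite -Wf | rewrite -Cf].
have [x [z [xu zv gain]]] := w_exchange u v cuv.
move: xu zv gain; rewrite !inE => /orP[] /eqP-> /orP[] /eqP-> gain.
- have [s' [t' [[c' _] W' C']]] := improve s t X Y cfg (erefl _) (erefl _) cuv gain.
  by exists s', t'; split; first left.
- have c2 : cross (t2 u) (s2 u) (t2 v) (s2 v) by rewrite t2u s2u t2v s2v -cross_revr.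
  rewrite -t2u -t2v in gain.
  have [s' [t' [[_ c'] W' C']]] := improve t2 s2 Y' X' (config_sym cfg')
    (etrans (weight_sym _ _) (weight_swap_on Z s t))
    (etrans (crossings_sym _ _) (crossings_swap_on Z s t)) c2 gain.
  by exists t', s'; rewrite (weight_sym t') (crossings_sym t'); split; first right.
- have c2 : cross (s2 u) (t2 u) (s2 v) (t2 v) by rewrite t2u s2u t2v s2v -cross_revl.
  rewrite -s2u -s2v in gain.
  have [s' [t' [[c' _] W' C']]] := improve s2 t2 X' Y' cfg'
    (weight_swap_on Z s t) (crossings_swap_on Z s t) c2 gain.
  by exists s', t'; split; first right.
- have c2 : cross (t u) (s u) (t v) (s v) by rewrite -cross_revl -cross_revr.
  have [s' [t' [[_ c'] W' C']]] := improve t s Y X (config_sym cfg) (weight_sym t s)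
    (crossings_sym t s) c2 gain.
  by exists t', s'; rewrite (weight_sym t') (crossings_sym t'); split; first left.
Qed.
End Configurations.

Lemma setU2_exchange (T : finType) (S : {set T}) x y q : y \notin S -> x != y ->
  (S :|: [set x; y]) :\ y :|: [set q] = S :|: [set x; q].
Proof.
by move=> yS xy; rewrite setUA [_ :|: [set y]]setUC setU1K -?setUA // !inE negb_or yS eq_sym xy.
Qed.

Lemma setUDl_disjoint (T : finType) (S A B : {set T}) : [disjoint A & S :|: B] ->
  (S :|: A) :\: (S :|: B) = A.
Proof.
move=> dA; apply/setP => e; rewrite in_setD.
have [eA | eNA] := boolP (e \in A); first by rewrite (disjointFr dA eA) inE eA orbT.
by rewrite !inE (negbTE eNA) orbF; case: (e \in S); rewrite ?andbF.
Qed.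

Lemma pair_chain (I : finType) n (S : {set 'I_n}) x y z z' (s t : I -> 'I_n) :
  uniq [:: x; y; z; z'] -> [&& x \notin S, y \notin S, z \notin S & z' \notin S] ->
  config (S :|: [set x; y]) (S :|: [set z; z']) s t ->
  exists Z q q', [/\ closed s t Z, ports s t Z = [set y] /\ ports s t (~: Z) = [set x],
     ports t s Z = [set q] /\ ports t s (~: Z) = [set q'], (q, q') = (z, z') \/ (q, q') = (z', z)
     & config (S :|: [set x; q]) (S :|: [set y; q']) (swap_on Z s t) (swap_on Z t s)].
Proof.
move=> /=; rewrite !inE !negb_or => /and4P[/and3P[xy xz xz'] /andP[yz yz'] zz' _].
case/and4P => xS yS zS z'S cfg.
set X := S :|: [set x; y]; set Y := S :|: [set z; z'].
have XY : X :\: Y = [set x; y].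
  apply: setUDl_disjoint.
  by rewrite disjoints_subset subUset !sub1set !inE !negb_or xS xz xz' yS yz yz'.
have YX : Y :\: X = [set z; z'].
  apply: setUDl_disjoint; rewrite disjoints_subset subUset !sub1set !inE !negb_or.
  by rewrite zS z'S !(eq_sym z) !(eq_sym z') xz xz' yz yz'.
have [s_inj t_inj sX tY] := cfg.
have yXY : y \in X :\: Y by rewrite XY !inE eqxx orbT.
have [Z [q [qYX cZ sZ tZ cfg']]] := config_chain cfg yXY.
have sZ' : ports s t (~: Z) = [set x].
  by rewrite portsC // sX tY XY sZ setUC setU1K // inE eq_sym.
have [q' qq' tZ'] :
    exists2 q', (q, q') = (z, z') \/ (q, q') = (z', z) & ports t s (~: Z) = [set q'].
  rewrite portsC // sX tY YX tZ; move: qYX; rewrite YX => /set2P[] ->.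
    by exists z'; [left | rewrite setU1K // inE].
  by exists z; [right | rewrite setUC setU1K // inE eq_sym].
have [Yq qS q'q] : [/\ Y = S :|: [set q'; q], q \notin S & q' != q].
  by case: qq' => -[-> ->]; rewrite /Y ?[[set z; z']]setUC; split; rewrite // eq_sym.
exists Z, q, q'; split => //.
by rewrite -(setU2_exchange q yS xy) -[[set y; q']]setUC -(setU2_exchange y qS q'q) -Yq.
Qed.

Section FourPoints.
Variables (R : realDomainType) (I : finType) (n : nat) (w : I -> 'I_n -> R).
Hypothesis w_exchange : interleaving_exchange w.
Variables (S : {set 'I_n}) (a b c d : 'I_n).
Hypotheses (lt_ab : a < b) (lt_bc : b < c) (lt_cd : c < d).
Hypothesis abcd_fresh : [&& a \notin S, b \notin S, c \notin S & d \notin S].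
Implicit Types s t : I -> 'I_n.
Local Open Scope ring_scope.

Definition uncrossed s t :=
  config (S :|: [set a; b]) (S :|: [set c; d]) s t \/
  config (S :|: [set b; c]) (S :|: [set a; d]) s t.

Definition dominated s t := exists s' t',
  config (S :|: [set a; c]) (S :|: [set b; d]) s' t' /\ weight w s t <= weight w s' t'.

Lemma dominated_le s t s' t' :
  weight w s t <= weight w s' t' -> dominated s' t' -> dominated s t.
Proof.
by move=> le_w [s'' [t'' [cfg le_w']]]; exists s'', t''; split; last exact: le_trans le_w'.
Qed.

Lemma dominated_sym s t : dominated t s -> dominated s t.
Proof. by apply: dominated_le; rewrite weight_sym. Qed.

Lemma crossed_to_uncrossed s t : config (S :|: [set a; c]) (S :|: [set b; d]) s t ->
  exists s' t', uncrossed s' t' /\ weight w s' t' = weight w s t.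
Proof.
move=> cfg; have uq : uniq [:: a; c; b; d] by rewrite /= !inE -!val_eqE /=; lia.
have fresh : [&& a \notin S, c \notin S, b \notin S & d \notin S].
  by case/and4P: abcd_fresh => -> -> -> ->.
have [Z [q [q' [_ _ _ [] [-> ->] cfg']]]] := pair_chain uq fresh cfg.
  by exists (swap_on Z s t), (swap_on Z t s); rewrite weight_swap_on; split; first left.
exists (swap_on Z t s), (swap_on Z s t); rewrite weight_sym weight_swap_on; split => //.
by right; rewrite [[set b; c]]setUC; apply: config_sym.
Qed.

Lemma uncrossed_ab_cd_step k s t :
  (forall s t, (crossings s t < k)%N -> uncrossed s t -> dominated s t) ->
  (crossings s t <= k)%N -> config (S :|: [set a; b]) (S :|: [set c; d]) s t -> dominated s t.
Proof.
move=> IH le_k cfg; have [s_inj t_inj _ _] := cfg.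
have uq : uniq [:: a; b; c; d] by rewrite /= !inE -!val_eqE /=; lia.
have [Z [q [q' [cZ [sZ sZ'] [tZ tZ'] qq' cfg']]]] := pair_chain uq abcd_fresh cfg.
case: qq' => -[qE q'E]; subst q q'.
  exists (swap_on Z s t), (swap_on Z t s); split => //.
  by rewrite weight_swap_on.
(* The chain from [b] ended at [d]: its ports [b, d] interleave with the
   ports [a, c] of the complementary rows. *)
have cross_bdac : cross b d a c by rewrite cross_ordered; lia.
have [u [v [uZ vNZ cuv]]] := closed_crossing s_inj t_inj cZ sZ tZ sZ' tZ' cross_bdac.
have [s' [t' [[cfg'' | cfg''] le_w lt_k]]] := uncrossing_step w_exchange cfg cfg' uZ vNZ cuv.
  by apply: dominated_le le_w (IH _ _ (leq_trans lt_k le_k) _); left.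
apply: dominated_le le_w (dominated_sym (IH _ _ _ _)).
  by rewrite crossings_sym; exact: leq_trans lt_k le_k.
by right; apply: config_sym.
Qed.

Lemma uncrossed_bc_ad_step k s t :
  (forall s t, (crossings s t < k)%N -> uncrossed s t -> dominated s t) ->
  (crossings s t <= k)%N -> config (S :|: [set b; c]) (S :|: [set a; d]) s t -> dominated s t.
Proof.
move=> IH le_k; rewrite [[set b; c]]setUC => cfg.
have uq : uniq [:: c; b; a; d] by rewrite /= !inE -!val_eqE /=; lia.
have fresh : [&& c \notin S, b \notin S, a \notin S & d \notin S].
  by case/and4P: abcd_fresh => -> -> -> ->.
have [Z [q [q' [_ _ _ [] [-> ->] cfg']]]] := pair_chain uq fresh cfg.
  exists (swap_on Z s t), (swap_on Z t s); rewrite weight_swap_on [[set a; c]]setUC.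
  by split.
apply: (dominated_le (s' := swap_on Z t s) (t' := swap_on Z s t)).
  by rewrite weight_sym weight_swap_on.
apply: (uncrossed_ab_cd_step IH); first by rewrite crossings_sym crossings_swap_on.
by rewrite [[set a; b]]setUC; apply: config_sym.
Qed.

Lemma uncrossed_dominated s t : uncrossed s t -> dominated s t.
Proof.
have [k] := ubnP (crossings s t); elim: k s t => // k IH s t lt_k [cfg | cfg].
  exact: uncrossed_ab_cd_step IH lt_k cfg.
exact: uncrossed_bc_ad_step IH lt_k cfg.
Qed.

Definition max_weight X Y (m : R) :=
  (forall s t, config X Y s t -> weight w s t <= m) /\
  exists s t, config X Y s t /\ weight w s t = m.

Lemma max_weight_plucker mL mM mR :
  max_weight (S :|: [set a; c]) (S :|: [set b; d]) mL ->
  max_weight (S :|: [set a; b]) (S :|: [set c; d]) mM ->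
  max_weight (S :|: [set b; c]) (S :|: [set a; d]) mR ->
  mL = Num.max mM mR.
Proof.
move=> [L_le [s [t [cL eL]]]] [M_le [sM [tM [cM eM]]]] [R_le [sR [tR [cR eR]]]].
apply/eqP; rewrite eq_le ge_max le_max; apply/and3P; split.
- rewrite -eL.
  have [s' [t' [[c' | c'] <-]]] := crossed_to_uncrossed cL; first by rewrite M_le.
  by rewrite R_le ?orbT.
- rewrite -eM; have [s' [t' [c' le_w]]] := uncrossed_dominated (or_introl cM).
  exact: le_trans le_w (L_le _ _ c').
- rewrite -eR; have [s' [t' [c' le_w]]] := uncrossed_dominated (or_intror cR).
  exact: le_trans le_w (L_le _ _ c').
Qed.
End FourPoints.

Section AbsWeight.
Variables (R : realDomainType) (I : finType) (n : nat) (y r : I -> R).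
Local Open Scope ring_scope.

Definition abs_weight i (x : 'I_n) : R := `|y i + (x : nat)%:R * r i|.

Lemma abs_weight_exchange : interleaving_exchange abs_weight.
Proof.
move=> u v a b c d.
wlog lt_ab : a b / (a < b)%N.
  move=> W; case: (ltngtP a b) => [lt_ab | lt_ba | /val_inj <-]; first exact: W.
    rewrite cross_revl => /(W _ _ lt_ba) [x [z [xba zcd gain]]].
    by exists x, z; split => //; move: xba; rewrite !inE orbC.
  by rewrite cross_degenerate.
wlog lt_cd : c d / (c < d)%N.
  move=> W; case: (ltngtP c d) => [lt_cd | lt_dc | /val_inj <-]; first exact: W.
    rewrite cross_revr => /(W _ _ lt_dc) [x [z [xab zdc gain]]].
    by exists x, z; split => //; move: zdc; rewrite !inE orbC.
  by rewrite cross_sym cross_degenerate.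
have le_nat i j : (i < j)%N -> i%:R <= j%:R :> R by move/ltnW; rewrite ler_nat.
rewrite cross_ordered // => /orP[/and3P[lt_ac lt_cb lt_bd] | /and3P[lt_ca lt_ad lt_db]].
  have /or4P[] := exchange_gain_interleaved (y u) (r u) (y v) (r v)
    (le_nat _ _ lt_ac) (le_nat _ _ lt_cb) (le_nat _ _ lt_bd) => gain;
    [exists a, c | exists a, d | exists b, c | exists b, d]; by rewrite !inE !eqxx ?orbT.
have /or4P[] := exchange_gain_interleaved (y v) (r v) (y u) (r u)
  (le_nat _ _ lt_ca) (le_nat _ _ lt_ad) (le_nat _ _ lt_db);
rewrite /exchange_gain addrC [X in _ <= X]addrC => gain;
  [exists a, c | exists b, c | exists a, d | exists b, d]; by rewrite !inE !eqxx ?orbT.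
Qed.
End AbsWeight.

(** * Ultradiscrete permanents *)

Section Permanent.
Variables (R : realDomainType) (N : nat).
Local Open Scope ring_scope.

Lemma upm_ge (A : 'M[R]_N) (p : 'S_N) : \sum_i A i (p i) <= upm A.
Proof. exact: (le_bigmax _ (fun p : 'S_N => \sum_i A i (p i))). Qed.

Lemma upm_attained (A : 'M[R]_N) : exists p : 'S_N, upm A = \sum_i A i (p i).
Proof.
apply: (big_ind (fun m => exists p : 'S_N, m = \sum_i A i (p i))) => [|_ _ [p ->] [q ->]|p _].
- by exists 1%g; apply: eq_bigr => i _; rewrite perm1.
- by case: (leP (\sum_i A i (p i)) (\sum_i A i (q i))) => _; [exists q | exists p].
- by exists p.
Qed.

Variables (n : nat) (y r : 'I_N -> R).

Definition colset (J : seq nat) : {set 'I_n} := [set x : 'I_n | (x : nat) \in J].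

Lemma Uperm_entry (J : seq nat) i c :
  (\matrix_(i < N, c < N) xvec y r (nth 0 (map Posz J) c) i 0) i c =
  `|y i + (nth 0%N J c)%:R * r i|.
Proof.
rewrite !mxE; case: (ltnP c (size J)) => cJ; first by rewrite (nth_map 0%N).
by rewrite !nth_default ?size_map.
Qed.

Lemma Uperm_ge (J : seq nat) (s : 'I_N -> 'I_n) : size J = N -> injective s ->
  (forall i, (s i : nat) \in J) -> \sum_i abs_weight y r i (s i) <= Uperm y r (map Posz J).
Proof.
move=> sizeJ s_inj sJ; have idx i : (index (s i : nat) J < N)%N by rewrite -sizeJ index_mem.
have idx_inj : injective (fun i => Ordinal (idx i)).
  move=> i j /(congr1 val) /= eq_idx; apply/s_inj/ord_inj.
  by rewrite -(nth_index 0%N (sJ i)) eq_idx (nth_index 0%N (sJ j)).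
rewrite /Uperm; set A := (X in upm X).
have -> : \sum_i abs_weight y r i (s i) = \sum_i A i (perm idx_inj i).
  by apply: eq_bigr => i _; rewrite Uperm_entry permE /= (nth_index 0%N (sJ i)).
exact: upm_ge.
Qed.

Lemma Uperm_attained (J : seq nat) : uniq J -> size J = N -> {in J, forall j, j < n}%N ->
  exists s : 'I_N -> 'I_n, [/\ injective s, s @: setT = colset J
                            & \sum_i abs_weight y r i (s i) = Uperm y r (map Posz J)].
Proof.
move=> uJ sizeJ J_lt; rewrite /Uperm; set A := (X in upm X); have [p ->] := upm_attained A.
have lt_n i : (nth 0%N J (p i) < n)%N by apply: J_lt; rewrite mem_nth // sizeJ.
exists (fun i => Ordinal (lt_n i)); split.
- move=> i j /(congr1 val) /= /eqP; rewrite nth_uniq ?sizeJ // => /eqP/val_inj.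
  exact: perm_inj.
- apply/eqP; rewrite eqEsubset; apply/andP; split; apply/subsetP => x; rewrite inE.
    by case/imsetP => i _ ->; rewrite mem_nth // sizeJ.
  move=> xJ; have idx : (index (x : nat) J < N)%N by rewrite -sizeJ index_mem.
  apply/imsetP; exists ((p^-1)%g (Ordinal idx)) => //.
  by apply: val_inj; rewrite /= permKV nth_index.
- by apply: eq_bigr => i _; rewrite Uperm_entry.
Qed.

Lemma max_weight_Uperm (J1 J2 : seq nat) : uniq J1 -> uniq J2 -> size J1 = N -> size J2 = N ->
  {in J1, forall j, j < n}%N -> {in J2, forall j, j < n}%N ->
  max_weight (abs_weight y r) (colset J1) (colset J2)
    (Uperm y r (map Posz J1) + Uperm y r (map Posz J2)).
Proof.
move=> uJ1 uJ2 sizeJ1 sizeJ2 J1_lt J2_lt; split.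
  move=> s t [s_inj t_inj sJ1 tJ2]; apply: lerD.
    by apply: Uperm_ge sizeJ1 s_inj _ => i; have := imset_f s (in_setT i); rewrite sJ1 inE.
  by apply: Uperm_ge sizeJ2 t_inj _ => i; have := imset_f t (in_setT i); rewrite tJ2 inE.
have [s [s_inj sJ1 <-]] := Uperm_attained uJ1 sizeJ1 J1_lt.
have [t [t_inj tJ2 <-]] := Uperm_attained uJ2 sizeJ2 J2_lt.
by exists s, t.
Qed.
End Permanent.

Definition iota_minus (m : nat) (K : seq nat) := [seq j <- iota 1 m | j \notin K].

Lemma size_iota_minus m K : uniq K -> all (fun k => 0 < k <= m) K ->
  size (iota_minus m K) = m - size K.
Proof.
move=> uK K_in; have countK : count (mem K) (iota 1 m) = size K.
  rewrite -size_filter; apply/perm_size/uniq_perm; rewrite ?filter_uniq ?iota_uniq // => k.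
  rewrite mem_filter andb_idr // mem_iota => kK; have := allP K_in k kK; lia.
by rewrite size_filter -[m in RHS](size_iota 1) -(count_predC (mem K) (iota 1 m)) countK addKn.
Qed.

Lemma max_weight_ranges (R : realDomainType) N (y r : 'I_N -> R) X Y m1 K1 m2 K2 :
  X = colset N.+3 (iota_minus m1 K1) -> Y = colset N.+3 (iota_minus m2 K2) ->
  m1 <= N.+2 -> m2 <= N.+2 -> size (iota_minus m1 K1) = N -> size (iota_minus m2 K2) = N ->
  max_weight (abs_weight y r) X Y (Uperm y r (range_minus m1 K1) + Uperm y r (range_minus m2 K2))%R.
Proof.
move=> -> -> m1_le m2_le size1 size2; apply: max_weight_Uperm;
  by rewrite ?filter_uniq ?iota_uniq // => j; rewrite mem_filter mem_iota; lia.
Qed.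

Ltac range_set :=
  apply/setP => x; rewrite /colset !inE !mem_filter !mem_iota !inE -!val_eqE /= !inordK; lia.

Local Open Scope ring_scope.

Theorem theorem1 (R : realFieldType) (N : nat) (y r : 'I_N -> R)
  (k1 k2 k3 : nat) :
  (2 <= N)%N -> (1 <= k1)%N -> (k1 < k2)%N -> (k2 < k3)%N -> (k3 <= N.+1)%N ->
  Uperm y r (range_minus N.+1 [:: k2]) + Uperm y r (range_minus N.+2 [:: k1; k3])
  = Num.max
      (Uperm y r (range_minus N.+1 [:: k3]) + Uperm y r (range_minus N.+2 [:: k1; k2]))
      (Uperm y r (range_minus N.+1 [:: k1]) + Uperm y r (range_minus N.+2 [:: k2; k3])).
Proof.
(* [2 <= N] follows from the other hypotheses. *)
move=> _ k1_pos lt12 lt23 k3_le.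
have sizes m K : uniq K -> all (fun k => 0 < k <= m)%N K -> (m - size K = N)%N ->
    size (iota_minus m K) = N.
  by move=> uK K_in <-; apply: size_iota_minus.
apply: (max_weight_plucker (abs_weight_exchange y r)
  (S := colset N.+3 (iota_minus N.+1 [:: k1; k2; k3]))
  (a := inord k1) (b := inord k2) (c := inord k3) (d := inord N.+2)); rewrite ?inordK; try lia.
  by rewrite /colset !inE !mem_filter !mem_iota !inE !inordK; lia.
all: apply: max_weight_ranges; try range_set; rewrite // sizes //= ?inE; lia.
Qed.
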